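(* Let $m \equiv 1 \pmod 4$ with $m \ge 5$, $n = 3^m - 1$, $v = (3^{(m+1)/2}-1)/2$ and $\delta = (3^{(m-1)/2}+5)/2$. Then $\gcd(v,n) = 1$, and, setting $T_{(0,3,m)}(v) = \{ vi \bmod n : i \in T_{(0,3,m)}\}$, we have $\{1, 2, \ldots, \delta-1\} \subseteq T_{(0,3,m)}(v)$.
   Context: For an integer $0 \le j \le n-1$ with $3$-adic expansion $j = \sum_{t=0}^{m-1} j_t 3^t$, $j_t \in \{0,1,2\}$, let $w_3(j) = \sum_{t=0}^{m-1} j_t$. For distinct $i_1,i_2 \in \{0,1,2,3\}$, $T_{(i_1,i_2,m)} = \{1 \le j \le n-1 : w_3(j) \equiv i_1 \text{ or } i_2 \pmod 4\}$. For an integer $b$, $b \bmod n$ is the unique $b_0 \in \{0,\ldots,n-1\}$ with $b \equiv b_0 \pmod n$. *)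

From mathcomp Require Import all_boot.
Set Implicit Arguments. Unset Strict Implicit. Unset Printing Implicit Defensive.

Fixpoint w3_aux (fuel j : nat) : nat :=
  match fuel with
  | 0 => 0
  | fuel'.+1 => if j == 0 then 0 else j %% 3 + w3_aux fuel' (j %/ 3)
  end.
Definition w3 (j : nat) : nat := w3_aux j.+1 j.

(* membership in T_(i1,i2,m) = {1 <= j <= n-1 : w3 j = i1 or i2 (mod 4)}, n = 3^m - 1 *)
Definition inT (i1 i2 m j : nat) : bool :=
  [&& 1 <= j, j <= 3 ^ m - 2 & (w3 j %% 4 == i1) || (w3 j %% 4 == i2)].

(* Put H := 3^h with m = 2h + 1, so that H = 4e + 1, n = 3H^2 - 1 and
   v = (3H - 1)/2 = 6e + 1.  Since 2v(1 + 3H) = 3n + 2 and n is even,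
   v(1 + 3H) = 1 + 3n/2, so multiplication by v sends k(1 + 3H) to k when k
   is even and to k + n/2 when k is odd; the extra n/2 is cancelled by
   shifting the odd witness by (H - 1)/2 (1 + 3H) + H.  The base-3 digits of
   these witnesses are two copies of the digits of a small number, possibly
   separated by a digit 1, so their weights are 2w or 2w + 1 with w of the
   parity of that number, i.e. 0 or 3 mod 4.  The one odd k too large for
   this shift, k = 2e + 1, is v(1 + 2H) mod n. *)
From mathcomp Require Import all_boot zify.

Set Implicit Arguments.
Unset Strict Implicit.
Unset Printing Implicit Defensive.

Lemma w3_aux_fuel fuel fuel' j :
  j < fuel -> j < fuel' -> w3_aux fuel j = w3_aux fuel' j.
Proof.
elim: fuel fuel' j => [|f IH] [|f'] j //= lt_j_f lt_j_f'.
have [//|j_neq0] := eqVneq j 0.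
have : j %/ 3 < j by rewrite ltn_Pdiv // lt0n.
by move=> lt_q_j; rewrite (IH f') //; lia.
Qed.

Lemma w3E j : w3 j = if j == 0 then 0 else j %% 3 + w3 (j %/ 3).
Proof.
rewrite {1}/w3 /=; have [//|j_neq0] := eqVneq j 0.
have : j %/ 3 < j by rewrite ltn_Pdiv // lt0n.
by move=> lt_q_j; rewrite /w3 (@w3_aux_fuel _ (j %/ 3).+1) //; lia.
Qed.

Lemma w3_digit r q : r < 3 -> w3 (r + 3 * q) = r + w3 q.
Proof.
move=> lt_r3; rewrite w3E.
have [rq0|_] := eqVneq (r + 3 * q) 0.
  by have [-> ->] : r = 0 /\ q = 0 by lia.
rewrite [r + _]addnC mulnC modnMDl modn_small //.
by rewrite divnMDl // divn_small // addn0.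
Qed.

Lemma w3_small r : r < 3 -> w3 r = r.
Proof. by move=> lt_r3; have := @w3_digit r 0 lt_r3; rewrite muln0 addn0. Qed.

Lemma w3_cat j a b : a < 3 ^ j -> w3 (a + 3 ^ j * b) = w3 a + w3 b.
Proof.
elim: j a => [|j IH] a lt_a.
  by move: lt_a; rewrite expn0 ltnS leqn0 => /eqP->; rewrite mul1n.
have lt_r3 : a %% 3 < 3 by rewrite ltn_pmod.
have lt_q : a %/ 3 < 3 ^ j by rewrite ltn_divLR // mulnC -expnS.
have -> : a + 3 ^ j.+1 * b = a %% 3 + 3 * (a %/ 3 + 3 ^ j * b).
  by rewrite expnS {1}(divn_eq a 3); lia.
rewrite w3_digit // IH // addnA; congr (_ + _).
by rewrite -w3_digit // [3 * _]mulnC [_ + _ * 3]addnC -divn_eq.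
Qed.

Lemma w3_mul3 b : w3 (3 * b) = w3 b.
Proof. by rewrite -(add0n (3 * b)) (@w3_cat 1). Qed.

(* 3 is odd, so j and its digit sum have the same parity. *)
Lemma w3_odd j : odd (w3 j) = odd j.
Proof.
elim: j {-2}j (leqnn j) => [|N IH] j le_jN.
  by move: le_jN; rewrite leqn0 => /eqP->.
rewrite w3E; have [->//|j_neq0] := eqVneq j 0.
have : j %/ 3 < j by rewrite ltn_Pdiv // lt0n.
move=> lt_q_j; rewrite oddD IH; last by lia.
by rewrite {3}(divn_eq j 3) oddD oddM /= andbT addbC.
Qed.

Lemma modn_addMr k n q : k < n -> (k + n * q) %% n = k.
Proof. by move=> lt_kn; rewrite addnC mulnC modnMDl modn_small. Qed.

Definition mem_scaled (T : pred nat) (v n k : nat) :=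
  exists2 i, T i & (v * i) %% n = k.

Lemma coprime_6e1 e : coprime (6 * e + 1) (48 * e ^ 2 + 24 * e + 2).
Proof.
apply/coprimeP; first by rewrite addn1.
by exists (24 * e ^ 2 + 24 * e + 5, 3 * e + 2) => /=; nia.
Qed.

Section WeightClassWitnesses.

Variables h e : nat.
Hypothesis exp3h : 3 ^ h = 4 * e + 1.

Let m := (2 * h).+1.
Let n := 48 * e ^ 2 + 24 * e + 2.
Let v := 6 * e + 1.
Let T := inT 0 3 m.

Lemma exp3m : 3 ^ m = n.+1.
Proof. by rewrite /m expnS [2 * h]mulnC expnM exp3h; lia. Qed.

Lemma v_eq : (3 ^ h.+1 - 1) %/ 2 = v.
Proof. by rewrite expnS exp3h; lia. Qed.

Lemma delta_eq : (3 ^ h + 5) %/ 2 - 1 = 2 * e + 2.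
Proof. by rewrite exp3h; lia. Qed.

Lemma inT03_intro i :
  0 < i < n -> (w3 i %% 4 == 0) || (w3 i %% 4 == 3) -> T i.
Proof.
by move=> /andP[i_gt0 lt_in] w_i; rewrite /T /inT exp3m i_gt0 w_i andbT; lia.
Qed.

Hypothesis e_ge2 : 2 <= e.

Lemma mem_scaled_even k : 0 < k <= 2 * e + 2 -> ~~ odd k -> mem_scaled T v n k.
Proof.
move=> /andP[k_gt0 le_k] k_even.
have lt_kH : k < 3 ^ h by rewrite exp3h; lia.
exists (k + 3 ^ h * (3 * k)).
  apply: inT03_intro; first by rewrite exp3h; apply/andP; split; nia.
  by rewrite w3_cat // w3_mul3; move: k_even; rewrite -w3_odd; lia.
have [j kE] : exists j, k = 2 * j by exists k./2; lia.
rewrite -[RHS](@modn_addMr k n (3 * j)); last by nia.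
by rewrite exp3h /v /n kE; congr (_ %% _); nia.
Qed.

Lemma mem_scaled_odd k : k < 2 * e + 1 -> odd k -> mem_scaled T v n k.
Proof.
move=> lt_k k_odd.
have [j kE] : exists j, k = 2 * j + 1 by exists k./2; lia.
set b := k + 2 * e.
have lt_bH : b < 3 ^ h by rewrite exp3h /b; lia.
exists (b + 3 ^ h * (1 + 3 * b)).
  apply: inT03_intro; first by rewrite exp3h /b; apply/andP; split; nia.
  have b_odd : odd (w3 b) by rewrite w3_odd /b oddD k_odd oddM.
  by rewrite w3_cat // (@w3_cat 1) // (@w3_small 1) //; move: b_odd; lia.
rewrite -[RHS](@modn_addMr k n (3 * j + 3 * e + 2)); last by nia.
by rewrite exp3h /v /n /b kE; congr (_ %% _); nia.
Qed.

Lemma mem_scaled_wrap : mem_scaled T v n (2 * e + 1).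
Proof.
exists (1 + 3 ^ h * 2).
  apply: inT03_intro; first by rewrite exp3h; apply/andP; split; nia.
  by rewrite w3_cat ?(@w3_small 1) ?(@w3_small 2) // exp3h; lia.
rewrite -[RHS](@modn_addMr _ n 1); last by nia.
by rewrite exp3h /v /n; congr (_ %% _); nia.
Qed.

Lemma mem_scaled_small k : 0 < k <= 2 * e + 2 -> mem_scaled T v n k.
Proof.
move=> /andP[k_gt0 le_k].
have [k_odd|k_even] := boolP (odd k); last by apply: mem_scaled_even; lia.
have [->|neq_k] := eqVneq k (2 * e + 1); first exact: mem_scaled_wrap.
by apply: mem_scaled_odd => //; lia.
Qed.

End WeightClassWitnesses.

Lemma exp3_even_mod4 t : 0 < t -> exists2 e, 3 ^ (2 * t) = 4 * e + 1 & 2 <= e.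
Proof.
move=> t_gt0; rewrite expnM (_ : 3 ^ 2 = 9) //.
have mod4 : 9 ^ t %% 4 = 1 by rewrite -modnXm exp1n.
have ge9 : 9 <= 9 ^ t by rewrite -{1}(expn1 9) leq_pexp2l.
by exists (9 ^ t %/ 4); lia.
Qed.

Theorem lemma1 (m : nat) :
  m %% 4 = 1 -> 5 <= m ->
  let n := 3 ^ m - 1 in
  let v := (3 ^ ((m + 1) %/ 2) - 1) %/ 2 in
  let delta := (3 ^ ((m - 1) %/ 2) + 5) %/ 2 in
  gcdn v n = 1 /\
  (forall k, 1 <= k <= delta - 1 ->
     exists2 i, inT 0 3 m i & (v * i) %% n = k).
Proof.
move=> m_mod4 m_ge5.
have [t t_gt0 ->] : exists2 t, 0 < t & m = (2 * (2 * t)).+1.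
  by exists (m %/ 4); lia.
have [e exp3h e_ge2] := exp3_even_mod4 t_gt0.
move=> n v delta.
have nE : n = 48 * e ^ 2 + 24 * e + 2 by rewrite /n (exp3m exp3h); lia.
have vE : v = 6 * e + 1.
  rewrite /v (_ : ((2 * (2 * t)).+1 + 1) %/ 2 = (2 * t).+1); last by lia.
  exact: v_eq exp3h.
have deltaE : delta - 1 = 2 * e + 2.
  rewrite /delta (_ : ((2 * (2 * t)).+1 - 1) %/ 2 = 2 * t); last by lia.
  exact: delta_eq exp3h.
rewrite nE vE deltaE; split; first exact/eqP/coprime_6e1.
by move=> k k_range; apply: (mem_scaled_small exp3h e_ge2).
Qed.
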